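(* Let $A$ be a commutative ring, regarded as graded and concentrated in grade $0$, and let $B$ be a commutative $\mathbb{Z}$-graded $A$-algebra with $B_n=0$ for all $n<0$ and $B_0=A$. If $B_n\neq 0$ for some $n>0$, then the first Hochschild homology group $HH_1(B)$ of $B$ over $A$ is nontrivial.
   Context: $HH_*(B)$ denotes the Hochschild homology of the $A$-algebra $B$ relative to $A$ (for commutative $B$, $HH_1(B)$ is the module of Kähler differentials $\Omega^1_{B/A}$). *)

From HB Require Import structures.
From mathcomp Require Import all_boot all_order all_algebra.
Set Implicit Arguments. Unset Strict Implicit. Unset Printing Implicit Defensive.
Import Order.TTheory GRing.Theory Num.Theory.
Local Open Scope ring_scope.

(* A Z-grading of the commutative A-algebra B, where A is regarded as graded
   and concentrated in degree 0: Bg n is the set of homogeneous elements of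
   degree n. *)
Definition is_graded_algebra (A : comRingType) (B : comAlgType A)
    (Bg : int -> B -> Prop) : Prop :=
  (forall n, Bg n 0) /\
  (forall n x y, Bg n x -> Bg n y -> Bg n (x - y)) /\
  (forall m n x y, Bg m x -> Bg n y -> Bg (m + n)%R (x * y)) /\
  (forall a : A, Bg 0 (a%:A)) /\
      (forall x : B, exists (s : seq int) (f : int -> B),
          (forall i, Bg i (f i)) /\ x = \sum_(i <- s) f i) /\
      (forall (s : seq int) (f : int -> B), uniq s ->
          (forall i, Bg i (f i)) -> \sum_(i <- s) f i = 0 ->
          forall i, i \in s -> f i = 0).

(* Kähler differentials Omega^1_{B/A}, presented as the free B-module on
   symbols (d b), b in B, modulo the submodule generated by
   d(b+b') - db - db',  d(bb') - b db' - b' db,  d(a) (a in the image of A).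
   A formal sum  sum_i c_i d(b_i)  is encoded by the list [:: (c_i, b_i)].
   kd_eq is the congruence on formal sums whose quotient is Omega^1_{B/A}:
   the first four base relations present the free module, the last three
   the derivation relations (with arbitrary coefficient c, so the generated
   sub-B-module is obtained). *)
Inductive kd_eq (A : comRingType) (B : comAlgType A) :
    seq (B * B) -> seq (B * B) -> Prop :=
  | kd_refl s : kd_eq s s
  | kd_sym s t : kd_eq s t -> kd_eq t s
  | kd_trans s t u : kd_eq s t -> kd_eq t u -> kd_eq s u
  | kd_cat s s' t t' : kd_eq s t -> kd_eq s' t' -> kd_eq (s ++ s') (t ++ t')
  | kd_perm s t : perm_eq s t -> kd_eq s t
  | kd_addc c c' b : kd_eq [:: (c, b); (c', b)] [:: (c + c', b)]
  | kd_zero b : kd_eq [:: (0, b)] [::]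
  | kd_add c b b' : kd_eq [:: (c, b + b')] [:: (c, b); (c, b')]
  | kd_mul c b b' : kd_eq [:: (c, b * b')] [:: (c * b, b'); (c * b', b)]
  | kd_const c (a : A) : kd_eq [:: (c, a%:A)] [::].

(* HH_1(B) = Omega^1_{B/A} is nontrivial: some element is nonzero. *)
Definition HH1_nontrivial (A : comRingType) (B : comAlgType A) : Prop :=
  exists s : seq (B * B), ~ kd_eq s [::].

From HB Require Import structures.
From mathcomp Require Import all_boot all_order all_algebra.
From mathcomp Require Import zify ring.
From Stdlib Require Import Classical ClassicalEpsilon.
Import Order.TTheory GRing.Theory Num.Theory.
Local Open Scope ring_scope.

Set Implicit Arguments. Unset Strict Implicit.

(* Let n > 0 be the least degree with B_n <> 0.  As B has nothing in negative
   degrees nor in degrees 0 < i < n, the projection x |-> x_0 is a ring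
   morphism and the projection x |-> x_n satisfies the Leibniz rule
   (xy)_n = x_0 y_n + y_0 x_n; it also kills A, which lies in degree 0.
   Hence  c db |-> c_0 b_n  is a well-defined map Omega^1_{B/A} -> B_n,
   and it sends dx to x <> 0 for any nonzero x in B_n. *)

Section DerivationPairing.

Variables (A : comRingType) (B : comAlgType A) (R : comRingType).
Variables (e D : B -> R).
Hypothesis e_add : forall x y, e (x + y) = e x + e y.
Hypothesis e_mul : forall x y, e (x * y) = e x * e y.
Hypothesis D_add : forall x y, D (x + y) = D x + D y.
Hypothesis D_leibniz : forall x y, D (x * y) = e x * D y + e y * D x.
Hypothesis D_scalar : forall a : A, D a%:A = 0.

Definition derivation_pairing (s : seq (B * B)) := \sum_(p <- s) e p.1 * D p.2.

Lemma kd_eq_pairing s t : kd_eq s t -> derivation_pairing s = derivation_pairing t.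
Proof.
have e0 : e 0 = 0 by apply: (addrI (e 0)); rewrite -e_add !addr0.
rewrite /derivation_pairing; elim=> {s t} //.
- by move=> s t u _ -> _ ->.
- by move=> s s' t t' _ e1 _ e2; rewrite !big_cat /= e1 e2.
- by move=> s t; apply: perm_big.
- by move=> c c' b; rewrite !big_cons !big_nil /= e_add; ring.
- by move=> b; rewrite !big_cons !big_nil /= e0 mul0r addr0.
- by move=> c b b'; rewrite !big_cons !big_nil /= D_add; ring.
- by move=> c b b'; rewrite !big_cons !big_nil /= D_leibniz !e_mul; ring.
- by move=> c a; rewrite !big_cons !big_nil /= D_scalar mulr0 addr0.
Qed.

Lemma HH1_nontrivial_of_pairing x : e 1 * D x != 0 -> HH1_nontrivial B.
Proof.
move=> Dx; exists [:: (1, x)] => /kd_eq_pairing.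
by rewrite /derivation_pairing big_cons !big_nil /= addr0 => /eqP; rewrite (negbTE Dx).
Qed.

End DerivationPairing.

Lemma ex_minimal (P : nat -> Prop) :
  (exists m, P m) -> exists m, P m /\ forall k, (k < m)%N -> ~ P k.
Proof.
move=> [m Pm]; apply: NNPP => nomin; elim/ltn_ind: m Pm => m IH Pm.
by apply: nomin; exists m; split=> // k km; apply: IH.
Qed.

Definition restrict (V : zmodType) (s : seq int) (f : int -> V) i :=
  if i \in s then f i else 0.

Lemma sum_restrict (V : zmodType) (s u : seq int) (f : int -> V) :
  uniq s -> uniq u -> {subset s <= u} ->
  \sum_(i <- u) restrict s f i = \sum_(i <- s) f i.
Proof.
move=> us uu su; rewrite /restrict -big_mkcond /= -big_filter.
apply: perm_big; apply: uniq_perm => [||i]; rewrite ?filter_uniq //.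
by rewrite mem_filter; case: (boolP (i \in s)) => // /su ->.
Qed.

Section Grading.

Variables (A : comRingType) (B : comAlgType A) (Bg : int -> B -> Prop).
Hypothesis hgr : is_graded_algebra Bg.

Lemma graded0 n : Bg n 0.
Proof. by have [h0 _] := hgr; apply: h0. Qed.

Lemma gradedB n x y : Bg n x -> Bg n y -> Bg n (x - y).
Proof. by have [_ [hB _]] := hgr; apply: hB. Qed.

Lemma gradedD n x y : Bg n x -> Bg n y -> Bg n (x + y).
Proof.
move=> hx hy; rewrite -[y]opprK -[- y]sub0r.
by apply: gradedB => //; apply: gradedB => //; apply: graded0.
Qed.

Lemma gradedM m n x y : Bg m x -> Bg n y -> Bg (m + n) (x * y).
Proof. by have [_ [_ [hM _]]] := hgr; apply: hM. Qed.

Lemma graded_scalar (a : A) : Bg 0 a%:A.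
Proof. by have [_ [_ [_ [hA _]]]] := hgr; apply: hA. Qed.

Lemma graded_span x :
  exists s f, (forall i, Bg i (f i)) /\ x = \sum_(i <- s) f i.
Proof. by have [_ [_ [_ [_ [hspan _]]]]] := hgr; apply: hspan. Qed.

Lemma graded_direct s f : uniq s -> (forall i, Bg i (f i)) ->
  \sum_(i <- s) f i = 0 -> forall i, i \in s -> f i = 0.
Proof. by have [_ [_ [_ [_ [_ hdir]]]]] := hgr; apply: hdir. Qed.

Lemma graded_restrict s f : (forall i, Bg i (f i)) ->
  forall i, Bg i (restrict s f i).
Proof. by move=> hf i; rewrite /restrict; case: ifP => // _; apply: graded0. Qed.

Definition decomposition x s (f : int -> B) :=
  [/\ uniq s, forall i, Bg i (f i) & x = \sum_(i <- s) f i].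

Lemma decompositionD x y s f t g :
  decomposition x s f -> decomposition y t g ->
  decomposition (x + y) (undup (s ++ t)) (fun i => restrict s f i + restrict t g i).
Proof.
move=> [us fs ->] [ut gt ->]; split; first exact: undup_uniq.
  by move=> i; apply: gradedD; apply: graded_restrict.
rewrite big_split /= !sum_restrict ?undup_uniq // => i;
  by rewrite mem_undup mem_cat => ->; rewrite ?orbT.
Qed.

Lemma decomposition_homog m x :
  Bg m x -> decomposition x [:: m] (fun i => if i == m then x else 0).
Proof.
move=> hx; split; rewrite ?big_seq1 ?eqxx // => i.
by case: eqP => [-> //|_]; apply: graded0.
Qed.

Lemma decomposition_exists x : exists s f, decomposition x s f.
Proof.
have [s0 [f0 [hf ->]]] := graded_span x.
elim: s0 => [|i s0 [s [f IH]]].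
  by exists [::], (fun _ => 0); split; rewrite ?big_nil // => i; apply: graded0.
by rewrite big_cons; do 2 eexists; apply: decompositionD (decomposition_homog _) IH.
Qed.

Lemma decomposition_uniq x s f t g :
  decomposition x s f -> decomposition x t g ->
  forall k, restrict s f k = restrict t g k.
Proof.
move=> [us fs ex] [ut gt ex'] k.
set u := undup (s ++ t).
have su : {subset s <= u} by move=> i; rewrite mem_undup mem_cat => ->.
have tu : {subset t <= u} by move=> i; rewrite mem_undup mem_cat => ->; rewrite orbT.
have [ku|ku] := boolP (k \in u).
  apply/eqP; rewrite -subr_eq0; apply/eqP.
  apply: (graded_direct (f := fun i => restrict s f i - restrict t g i))
    (undup_uniq _) _ _ _ ku => [i|].
    by apply: gradedB; apply: graded_restrict.
  by rewrite sumrB !sum_restrict ?undup_uniq // -ex -ex' subrr.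
rewrite /restrict; case: ifP => [/su|_]; first by rewrite (negbTE ku).
by case: ifP => [/tu|//]; rewrite (negbTE ku).
Qed.

Definition component (k : int) (x : B) : B :=
  epsilon (inhabits 0)
    (fun y => exists s f, decomposition x s f /\ y = restrict s f k).

Lemma componentE x s f k : decomposition x s f -> component k x = restrict s f k.
Proof.
move=> dx; have [t [g dy]] := decomposition_exists x.
have hy : exists y, exists t g, decomposition x t g /\ y = restrict t g k.
  by exists (restrict t g k), t, g.
rewrite /component; have [u [h [du ->]]] := epsilon_spec (inhabits 0) _ hy.
exact: decomposition_uniq du dx k.
Qed.

Lemma componentD k x y : component k (x + y) = component k x + component k y.
Proof.
have [s [f dx]] := decomposition_exists x; have [t [g dy]] := decomposition_exists y.
rewrite (componentE k (decompositionD dx dy)) (componentE k dx) (componentE k dy).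
by rewrite /restrict mem_undup mem_cat; case: (k \in s); case: (k \in t); rewrite ?addr0.
Qed.

Lemma component_homog k m x : Bg m x -> component k x = if k == m then x else 0.
Proof.
move=> hx; rewrite (componentE k (decomposition_homog hx)) /restrict inE.
by case: eqP.
Qed.

Lemma component0 k : component k 0 = 0.
Proof. by rewrite (component_homog k (graded0 0)); case: eqP. Qed.

Lemma additive_eq0_on_homog (h : B -> B) :
  (forall x y, h (x + y) = h x + h y) -> (forall m x, Bg m x -> h x = 0) ->
  forall x, h x = 0.
Proof.
move=> hD hh x; have [s [f [hf ->]]] := graded_span x.
elim: s => [|i s IH]; first by rewrite big_nil (hh 0 0 (graded0 0)).
by rewrite big_cons hD IH (hh i _ (hf i)) addr0.
Qed.

Lemma biadditive_eq0_on_homog (F : B -> B -> B) :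
  (forall x y z, F (x + y) z = F x z + F y z) ->
  (forall x y z, F x (y + z) = F x y + F x z) ->
  (forall i j x y, Bg i x -> Bg j y -> F x y = 0) -> forall x y, F x y = 0.
Proof.
move=> hDl hDr hh x y.
apply: (additive_eq0_on_homog (h := F^~ y)) => // i x' hx.
by apply: (additive_eq0_on_homog (h := F x')) => // j y'; apply: hh hx.
Qed.

Hypothesis hneg : forall (n : int) (x : B), n < 0 -> Bg n x -> x = 0.

Lemma homog_eq0_or_ge0 i x : Bg i x -> x = 0 \/ 0 <= i.
Proof. by move=> hx; case: (ltrP i 0) => hi; [left; apply: hneg hx | right]. Qed.

Lemma component0M x y : component 0 (x * y) = component 0 x * component 0 y.
Proof.
apply/eqP; rewrite -subr_eq0; apply/eqP; move: x y.
apply: biadditive_eq0_on_homog => [x y z|x y z|i j x y hx hy].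
- by rewrite mulrDl !componentD; ring.
- by rewrite mulrDr !componentD; ring.
have [->|i0] := homog_eq0_or_ge0 hx; first by rewrite !mul0r component0 mul0r subrr.
have [->|j0] := homog_eq0_or_ge0 hy; first by rewrite !mulr0 component0 mulr0 subrr.
rewrite (component_homog _ (gradedM hx hy)) (component_homog _ hx) (component_homog _ hy).
have [<-|ni] := eqVneq 0 i; have [<-|nj] := eqVneq 0 j;
  rewrite ?mulr0 ?mul0r ?add0r ?eqxx ?subrr //; rewrite ifF ?subrr //; lia.
Qed.

Lemma component_leibniz n : 0 < n -> (forall i y, 0 < i < n -> Bg i y -> y = 0) ->
  forall x y, component n (x * y) =
    component 0 x * component n y + component 0 y * component n x.
Proof.
move=> n0 gap x y; apply/eqP; rewrite -subr_eq0; apply/eqP; move: x y.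
apply: biadditive_eq0_on_homog => [x y z|x y z|i j x y hx hy].
- by rewrite mulrDl !componentD; ring.
- by rewrite mulrDr !componentD; ring.
have [->|i0] := homog_eq0_or_ge0 hx; first by rewrite !mul0r !component0; ring.
have [->|j0] := homog_eq0_or_ge0 hy; first by rewrite !mulr0 !component0; ring.
rewrite (component_homog _ (gradedM hx hy)) !(component_homog _ hx) !(component_homog _ hy).
have nn0 : (n == 0) = false by lia.
have [<-|ni] := eqVneq 0 i; have [<-|nj] := eqVneq 0 j.
- by rewrite add0r nn0; ring.
- by rewrite add0r nn0; case: (n == j); ring.
- by rewrite addr0 nn0; case: (n == i); ring.
rewrite !mul0r addr0 subr0; case: eqP => // nij.
by rewrite (gap i x) ?mul0r //; lia.
Qed.

Lemma component_scalar k (a : A) : k != 0 -> component k a%:A = 0.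
Proof. by move=> k0; rewrite (component_homog k (graded_scalar a)) (negbTE k0). Qed.

Lemma component0_1 : component 0 1 = 1.
Proof. by rewrite -[1]scale1r (component_homog 0 (graded_scalar 1)). Qed.

Lemma minimal_positive_degree :
  (exists n x, 0 < n /\ Bg n x /\ x <> 0) ->
  exists n x, [/\ 0 < n, Bg n x, x <> 0 & forall i y, 0 < i < n -> Bg i y -> y = 0].
Proof.
move=> [[m|m] [x [m0 [hx x0]]]] //.
have hm : exists m, (0 < m)%N /\ exists y, Bg m%:Z y /\ y <> 0.
  by exists m; split=> //; exists x.
have [k [[k0 [y [hy y0]]] kmin]] := ex_minimal hm.
exists k%:Z, y; split=> // [[i|i] z] // /andP [i0 ik] hz.
by apply: NNPP => z0; apply: (kmin i ik); split=> //; exists z.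
Qed.

End Grading.

Theorem lemma5p3 (A : comRingType) (B : comAlgType A) (Bg : int -> B -> Prop)
  (hgr : is_graded_algebra Bg)
  (hneg : forall (n : int) (x : B), n < 0 -> Bg n x -> x = 0)
  (h0inj : injective (fun a : A => a%:A : B))
  (h0surj : forall x : B, Bg 0 x -> exists a : A, x = a%:A)
  (hpos : exists (n : int) (x : B), 0 < n /\ Bg n x /\ x <> 0) :
  HH1_nontrivial B.
Proof.
have [n [x [n0 hx x0 gap]]] := minimal_positive_degree hpos.
have Dx : component Bg 0 1 * component Bg n x != 0.
  by rewrite (component0_1 hgr) mul1r (component_homog hgr n hx) eqxx; apply/eqP.
apply: (HH1_nontrivial_of_pairing _ _ _ _ _ Dx).
- exact: componentD.
- exact: component0M.
- exact: componentD.
- exact: component_leibniz.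
- by move=> a; apply: component_scalar (lt0r_neq0 n0).
Qed.
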